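(* Let $X\in\mathbb{R}^{n\times d}$, $y\in\mathbb{R}^n$, and let $g:\mathbb{R}^d\to(-\infty,\infty]$ be a proper lower semicontinuous convex function with $g(k\beta)=kg(\beta)$ for all $k\ge0$, $\beta\in\mathbb{R}^d$, such that there exists $\beta\in\mathrm{relint}(\mathrm{dom}(g))$ and $P(\beta):=\frac12\|y-X\beta\|_2^2+g(\beta)$ attains its infimum. Let $-f^\star(-\theta)=-\frac12\|\theta\|_2^2+y^\top\theta$ and define \[ u^{\mathrm{DS}}(\theta;\tilde\beta)=\begin{cases}-f^\star(-\theta) & \text{if } g(\tilde\beta)-\theta^\top X\tilde\beta\ge0,\\ -\infty & \text{otherwise},\end{cases}\qquad u^{\mathrm{GM}}(\theta;\tilde\beta)=\begin{cases}-f^\star(-\theta) & \text{if } -f^\star(-\theta)\le P(\tilde\beta),\\ -\infty & \text{otherwise}.\end{cases} \] Then $u^{\mathrm{DS}}(\theta;\tilde\beta)\le u^{\mathrm{GM}}(\theta;\tilde\beta)$ for all $\tilde\beta\in\mathbb{R}^d$ and $\theta\in\mathbb{R}^n$.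
   Context: $\mathrm{dom}(g)=\{\beta:|g(\beta)|<\infty\}$; $\mathrm{relint}$ is relative interior; $f(z)=\frac12\|y-z\|_2^2$ and $f^\star$ is its Fenchel conjugate. *)

From HB Require Import structures.
From mathcomp Require Import all_boot all_order all_algebra.
From mathcomp Require Import all_classical all_reals all_analysis.
Set Implicit Arguments. Unset Strict Implicit. Unset Printing Implicit Defensive.
Import Order.TTheory GRing.Theory Num.Theory.
Import numFieldNormedType.Exports.
Local Open Scope classical_set_scope.
Local Open Scope ring_scope.

Definition sqnorm (R : realType) (m : nat) (v : 'cV[R]_m) : R :=
  \sum_(i < m) (v i 0) ^+ 2.

Definition dotv (R : realType) (m : nat) (u v : 'cV[R]_m) : R :=
  \sum_(i < m) u i 0 * v i 0.

Definition edom (R : realType) (T : Type) (g : T -> \bar R) : set T :=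
  [set b | g b \is a fin_num].

Definition proper_fun (R : realType) (T : Type) (g : T -> \bar R) : Prop :=
  (forall b, g b != -oo%E) /\ (exists b, g b \is a fin_num).

Definition convex_efun (R : realType) (m : nat) (g : 'cV[R]_m -> \bar R) : Prop :=
  forall (a : R) (x y : 'cV[R]_m), 0 <= a <= 1 ->
    (g (a *: x + (1 - a) *: y)%R <= a%:E * g x + (1 - a)%:E * g y)%E.

Definition pos_homogeneous (R : realType) (m : nat) (g : 'cV[R]_m -> \bar R) : Prop :=
  forall (k : R) (b : 'cV[R]_m), 0 <= k -> g (k *: b)%R = (k%:E * g b)%E.

Definition affine_hull (R : realType) (m : nat) (S : set 'cV[R]_m) : set 'cV[R]_m :=
  [set z | exists (k : nat) (a : 'I_k -> R) (v : 'I_k -> 'cV[R]_m),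
      (forall i, S (v i)) /\ \sum_(i < k) a i = 1 /\ z = \sum_(i < k) a i *: v i].

Definition relint (R : realType) (m : nat) (S : set 'cV[R]_m) : set 'cV[R]_m :=
  [set x | S x /\ exists2 e : R, 0 < e &
     forall z, affine_hull S z -> `|z - x| < e -> S z].

Definition Pobj (R : realType) (n d : nat) (X : 'M[R]_(n, d)) (y : 'cV[R]_n)
  (g : 'cV[R]_d -> \bar R) (b : 'cV[R]_d) : \bar R :=
  ((sqnorm (y - X *m b) / 2)%:E + g b)%E.

(* dual objective -f^*(-theta) = -1/2 ||theta||^2 + y^T theta *)
Definition dual_obj (R : realType) (n : nat) (y theta : 'cV[R]_n) : R :=
  - (sqnorm theta / 2) + dotv y theta.

Definition u_DS (R : realType) (n d : nat) (X : 'M[R]_(n, d)) (y : 'cV[R]_n)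
  (g : 'cV[R]_d -> \bar R) (theta : 'cV[R]_n) (bt : 'cV[R]_d) : \bar R :=
  if `[< (0 <= g bt - (dotv theta (X *m bt))%:E)%E >]
  then (dual_obj y theta)%:E else -oo%E.

Definition u_GM (R : realType) (n d : nat) (X : 'M[R]_(n, d)) (y : 'cV[R]_n)
  (g : 'cV[R]_d -> \bar R) (theta : 'cV[R]_n) (bt : 'cV[R]_d) : \bar R :=
  if `[< ((dual_obj y theta)%:E <= Pobj X y g bt)%E >]
  then (dual_obj y theta)%:E else -oo%E.

(** Weak duality. Fenchel-Young for the squared loss gives, for every [z],
    [-||theta||^2/2 + y^T theta <= ||y - z||^2/2 + theta^T z], the gap being
    [||y - z - theta||^2/2]. Taking [z = X bt] and using [theta^T X bt <= g(bt)]
    bounds the dual objective by [P(bt)]. *)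

From HB Require Import structures.
From mathcomp Require Import all_boot all_order all_algebra.
From mathcomp Require Import all_classical all_reals all_analysis.
From mathcomp Require Import ring lra.
Set Implicit Arguments. Unset Strict Implicit. Unset Printing Implicit Defensive.
Import Order.TTheory GRing.Theory Num.Theory.
Import numFieldNormedType.Exports.
Local Open Scope classical_set_scope.
Local Open Scope ring_scope.

Lemma sqr_fenchel_young (R : realFieldType) (a b v : R) :
  - (a ^+ 2 / 2) + b * a <= (b - v) ^+ 2 / 2 + a * v.
Proof.
rewrite -subr_ge0.
have -> : (b - v) ^+ 2 / 2 + a * v - (- (a ^+ 2 / 2) + b * a)
          = (b - v - a) ^+ 2 / 2 by field.
by rewrite divr_ge0 ?sqr_ge0.
Qed.

Lemma dual_obj_le (R : realType) (n : nat) (y theta z : 'cV[R]_n) :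
  dual_obj y theta <= sqnorm (y - z) / 2 + dotv theta z.
Proof.
rewrite /dual_obj /sqnorm /dotv !mulr_suml -sumrN -!big_split /=.
by apply: ler_sum => i _; rewrite !mxE; exact: sqr_fenchel_young.
Qed.

Lemma dual_obj_le_Pobj (R : realType) (n d : nat) (X : 'M[R]_(n, d))
    (y theta : 'cV[R]_n) (g : 'cV[R]_d -> \bar R) (b : 'cV[R]_d) :
  ((dotv theta (X *m b))%:E <= g b)%E -> ((dual_obj y theta)%:E <= Pobj X y g b)%E.
Proof.
rewrite /Pobj; case: (g b) => [c| |] //= hc; last by rewrite addey ?leey.
rewrite -EFinD lee_fin (le_trans (dual_obj_le y theta (X *m b))) //.
by rewrite lerD2l -lee_fin.
Qed.

Lemma u_DS_le_u_GM (R : realType) (n d : nat) (X : 'M[R]_(n, d))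
    (y : 'cV[R]_n) (g : 'cV[R]_d -> \bar R) (theta : 'cV[R]_n) (bt : 'cV[R]_d) :
  (u_DS X y g theta bt <= u_GM X y g theta bt)%E.
Proof.
rewrite /u_DS /u_GM; case: asboolP => [gap_ge0|_]; last exact: leNye.
by rewrite asboolT // dual_obj_le_Pobj // -sube_ge0 //.
Qed.

(* Weak duality holds for every [g]. *)
Theorem theorem10 (R : realType) (n d : nat) (X : 'M[R]_(n, d)) (y : 'cV[R]_n)
  (g : 'cV[R]_d -> \bar R)
  (g_proper : proper_fun g)
  (g_lsc : lower_semicontinuous g)
  (g_convex : convex_efun g)
  (g_hom : pos_homogeneous g)
  (g_relint : exists b, relint (edom g) b)
  (P_attains : exists bs, forall b, (Pobj X y g bs <= Pobj X y g b)%E) :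
  forall (bt : 'cV[R]_d) (theta : 'cV[R]_n),
    (u_DS X y g theta bt <= u_GM X y g theta bt)%E.
Proof. by move=> bt theta; exact: u_DS_le_u_GM. Qed.
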